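(* A local homomorphism $\Lambda\to\Lambda_1$ of discrete valuation rings of mixed characteristic $(0,p)$ is slightly ramified if and only if $e_1<p$, where $e_1$ is the absolute ramification index of $\Lambda_1$ (the valuation of $p$ in $\Lambda_1$).
   Context: For a local ring $(R,\mathfrak m_R)$, $\hat\Gamma(R,\mathfrak m_R)$ is the inverse limit of the system of finite-length local $R$-algebras with a divided power structure on their maximal ideal (transition maps divided power homomorphisms). A local homomorphism $\Lambda\to\Lambda_1$ is slightly ramified if the composite $\Lambda\to\hat\Gamma(\Lambda_1,\mathfrak m_{\Lambda_1})$ is injective, and highly ramified otherwise. *)

From HB Require Import structures.
From mathcomp Require Import all_boot all_order all_algebra.
Set Implicit Arguments. Unset Strict Implicit. Unset Printing Implicit Defensive.
Import Order.TTheory GRing.Theory Num.Theory.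
Local Open Scope ring_scope.

(* A commutative ring with units A is local: 1 <> 0 (built into the
   structure) and the non-units form an ideal (closed under addition);
   the maximal ideal is then the set of non-units. *)
Definition is_local (A : comUnitRingType) : Prop :=
  forall x y : A, x \notin GRing.unit -> y \notin GRing.unit ->
    (x + y) \notin GRing.unit.

Definition maxideal (A : comUnitRingType) (x : A) : Prop := x \notin GRing.unit.

Definition local_hom (L L1 : comUnitRingType) (f : L -> L1) : Prop :=
  forall x : L, x \notin GRing.unit -> f x \notin GRing.unit.

Definition is_uniformizer (L : idomainType) (pi : L) : Prop :=
  pi != 0 /\ pi \notin GRing.unit /\
  forall x : L, x != 0 -> exists (n : nat) (u : L), u \in GRing.unit /\ x = u * pi ^+ n.

Definition is_dvr (L : idomainType) : Prop := exists pi : L, is_uniformizer pi.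

(* Mixed characteristic (0,p): characteristic 0, residue characteristic p. *)
Definition mixed_char (L : idomainType) (p : nat) : Prop :=
  prime p /\ (forall n : nat, (0 < n)%N -> n%:R != 0 :> L) /\
  (p%:R : L) \notin GRing.unit.

(* Submodules of A, where A is an R-module via the ring map g : R -> A. *)
Definition is_submodule (R A : comUnitRingType) (g : R -> A) (S : A -> Prop) : Prop :=
  S 0 /\ (forall a b, S a -> S b -> S (a + b)) /\ (forall r a, S a -> S (g r * a)).

(* A has finite length as an R-module: it admits a composition series
   0 = M_0 < M_1 < ... < M_n = A with simple successive quotients. *)
Definition finite_length (R A : comUnitRingType) (g : R -> A) : Prop :=
  exists (n : nat) (M : nat -> A -> Prop),
    (forall a, M 0%N a <-> a = 0) /\ (forall a, M n a) /\
    (forall i, (i <= n)%N -> is_submodule g (M i)) /\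
    (forall i, (i < n)%N ->
       (forall a, M i a -> M i.+1 a) /\ (exists a, M i.+1 a /\ ~ M i a) /\
       (forall N : A -> Prop, is_submodule g N ->
          (forall a, M i a -> N a) -> (forall a, N a -> M i.+1 a) ->
          (forall a, N a -> M i a) \/ (forall a, M i.+1 a -> N a))).

Definition is_pd_structure (A : comUnitRingType) (I : A -> Prop)
  (gamma : nat -> A -> A) : Prop :=
  forall x y : A, I x -> I y ->
    gamma 0%N x = 1 /\ gamma 1%N x = x /\
        (forall n, (1 <= n)%N -> I (gamma n x)) /\
        (forall n, gamma n (x + y) = \sum_(i < n.+1) gamma i x * gamma (n - i)%N y) /\
        (forall (l : A) n, gamma n (l * x) = l ^+ n * gamma n x) /\
        (forall m n, gamma m x * gamma n x = 'C(m + n, m)%:R * gamma (m + n)%N x) /\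
        (forall m n, (1 <= n)%N ->
           gamma m (gamma n x) =
             ((m * n)`! %/ (m`! * (n`! ^ m)))%:R * gamma (m * n)%N x).

(* The objects of the inverse system defining hat-Gamma(R, m_R): finite-length
   local R-algebras A (structure map g) with a PD structure on m_A. *)
Definition pd_test_algebra (R A : comUnitRingType) (g : {rmorphism R -> A}) : Prop :=
  is_local A /\ finite_length g /\
  exists gamma : nat -> A -> A, is_pd_structure (@maxideal A) gamma.

(* f : L -> L1 is slightly ramified iff L -> hat-Gamma(L1, m_{L1}) is injective.
   An element of the inverse limit is zero iff all its components are zero, so
   the kernel of L -> hat-Gamma(L1) is the intersection of the kernels of the
   composites L -> L1 -> A over all objects A of the system. *)
Definition slightly_ramified (L L1 : comUnitRingType) (f : {rmorphism L -> L1}) : Prop :=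
  forall x : L,
    (forall (A : comUnitRingType) (g : {rmorphism L1 -> A}),
        pd_test_algebra g -> g (f x) = 0) ->
    x = 0.

Definition highly_ramified (L L1 : comUnitRingType) (f : {rmorphism L -> L1}) : Prop :=
  ~ slightly_ramified f.

From HB Require Import structures.
From mathcomp Require Import all_boot all_order all_algebra.
From mathcomp Require Import boolp generic_quotient ring_quotient.
From mathcomp Require Import ring zify.
Set Implicit Arguments. Unset Strict Implicit. Unset Printing Implicit Defensive.
Import GRing.Theory.
Local Open Scope ring_scope.
Local Open Scope quotient_scope.

(* If p <= e1, let A be a finite-length local L1-algebra with divided powers
   gamma on m_A.  Finite length forces a := image of pi1 into m_A, and then
   a^p = p! gamma_p(a) = u1 (p-1)! a^e1 gamma_p(a) lies in a^p m_A, so a^p = 0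
   and p = u1 a^e1 = 0 in A: the nonzero element p of L dies in hat-Gamma.
   If e1 < p, then n! divides pi1^(n-1) in L1, so x |-> x^n / n! is defined on
   the maximal ideal and descends to a divided power structure on every
   L1 / pi1^N; these quotients separate the points of L1, and f is injective. *)

Section Uniformizer.
Variables (R : idomainType) (pi : R).
Hypothesis pi_uniformizer : is_uniformizer pi.

Lemma uniformizer_dvd_nonunit x : x \notin GRing.unit -> exists r, x = pi * r.
Proof.
move=> x_nonunit; have [->|x_neq0] := eqVneq x 0; first by exists 0; rewrite mulr0.
case: pi_uniformizer => _ [_ /(_ x x_neq0)] [[|n] [v [v_unit x_eq]]].
  by move: x_nonunit; rewrite x_eq expr0 mulr1 v_unit.
by exists (v * pi ^+ n); rewrite x_eq exprS mulrCA.
Qed.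

Lemma uniformizer_mul_nonunit r : pi * r \notin GRing.unit.
Proof. by rewrite unitrM negb_and; case: pi_uniformizer => _ [-> _]. Qed.

Lemma uniformizer_mul_neq1 r : pi * r != 1.
Proof. by apply: contraNneq (uniformizer_mul_nonunit r) => ->; rewrite unitr1. Qed.

Lemma unitr1Dpi r : 1 + pi * r \in GRing.unit.
Proof.
apply/negPn/negP => /uniformizer_dvd_nonunit [s sum_eq].
by move: (uniformizer_mul_neq1 (s - r)); rewrite mulrBr -sum_eq addrK eqxx.
Qed.

Lemma uniformizer_local : is_local R.
Proof.
move=> x y /uniformizer_dvd_nonunit [r ->] /uniformizer_dvd_nonunit [s ->].
by rewrite -mulrDr uniformizer_mul_nonunit.
Qed.

Variables (p : nat) (u : R) (e : nat).
Hypotheses (R_mixed_char : mixed_char R p) (u_unit : u \in GRing.unit)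
  (p_ramification : p%:R = u * pi ^+ e).

Lemma natr_unit_coprime m : ~~ (p %| m)%N -> (m%:R : R) \in GRing.unit.
Proof.
case: R_mixed_char => p_prime [_ /uniformizer_dvd_nonunit [t p_eq]] p_ndvd_m.
apply/negPn/negP => /uniformizer_dvd_nonunit [r m_eq].
have [a _] := @Bezoutl p m (prime_gt0 p_prime).
rewrite (eqP (_ : coprime p m)) ?prime_coprime //; case/dvdnP => k bezout.
have one_eq : (1 : R) = pi * (k%:R * t - a%:R * r).
  rewrite mulrBr mulrCA [pi * (_ * r)]mulrCA -p_eq -m_eq -!natrM -bezout; ring.
by move: (uniformizer_mul_neq1 (k%:R * t - a%:R * r)); rewrite -one_eq eqxx.
Qed.

Lemma natr_fact_unit_split n : exists2 c, c \in GRing.unit &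
  (n`!)%:R = c * (p%:R : R) ^+ (n %/ p) * ((n %/ p)`!)%:R.
Proof.
case: R_mixed_char => /prime_gt0 p_gt0 _.
elim: n => [|n [c c_unit IH]]; first by exists 1; rewrite ?unitr1 // div0n mul1r mulr1.
rewrite divnS //; have [p_dvd|p_ndvd] := boolP (p %| n.+1)%N => /=.
  exists c => //; have n_eq : n.+1 = ((n %/ p).+1 * p)%N.
    by rewrite -{1}(divnK p_dvd) divnS // p_dvd.
  rewrite add1n factS natrM IH [in LHS]n_eq factS !natrM exprS; ring.
exists (n.+1%:R * c); first by rewrite unitrM c_unit natr_unit_coprime.
by rewrite add0n factS natrM IH; ring.
Qed.

(* Legendre's bound: v_pi(n!) = e v_p(n!) <= e (n - 1) / (p - 1) <= n - 1. *)
Lemma fact_dvd_uniformizer_exp n : (e < p)%N -> (0 < n)%N ->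
  exists w, pi ^+ n.-1 = (n`!)%:R * w.
Proof.
move=> e_lt_p; elim/ltn_ind: n => n IH n_gt0.
have p_gt1 : (1 < p)%N by case: R_mixed_char => /prime_gt1.
have [c c_unit fact_eq] := natr_fact_unit_split n.
set q := (n %/ p)%N in fact_eq.
have [q0|q_gt0] := posnP q.
  exists (c^-1 * pi ^+ n.-1).
  by rewrite fact_eq q0 expr0 !mulr1 mulrA mulrV // mul1r.
have [wq wq_eq] := IH q (ltn_Pdiv p_gt1 n_gt0) q_gt0.
have qp_le_n : (q * p <= n)%N by apply: leq_divM.
have eq_le_p : (e.+1 * q <= p * q)%N by rewrite leq_mul2r e_lt_p orbT.
set k := (n.-1 - (e * q + q.-1))%N.
have n_split : (e * q + q.-1 + k = n.-1)%N.
  by rewrite subnKC //; move: eq_le_p qp_le_n q_gt0; rewrite mulSn mulnC; lia.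
exists (c^-1 * (u ^+ q)^-1 * wq * pi ^+ k).
rewrite fact_eq p_ramification exprMn -n_split !exprD wq_eq exprM.
transitivity ((c * c^-1) * (u ^+ q * (u ^+ q)^-1) *
   (pi ^+ e ^+ q * ((q`!)%:R * wq) * pi ^+ k)); last by ring.
by rewrite mulrV // mulrV ?unitrX // !mul1r.
Qed.

End Uniformizer.

Lemma fact_expn_fact_dvdn m n : (0 < n)%N -> (m`! * n`! ^ m %| (m * n)`!)%N.
Proof.
move=> n_gt0; elim: m => [|m IH]; first by rewrite mul0n fact0 expn0.
have bin_eq := bin_fact (leq_addl (m * n) n); rewrite addnK in bin_eq.
have bin_diag := mul_bin_diag (m * n + n) n.-1; rewrite prednK // in bin_diag.
have bin_mul : 'C(m * n + n, n) = (m.+1 * 'C((m * n + n).-1, n.-1))%N.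
  apply/eqP; rewrite -(eqn_pmul2l n_gt0) -bin_diag; apply/eqP.
  by rewrite mulnA [(n * _)%N]mulnC mulSn addnC.
rewrite mulSn addnC -bin_eq bin_mul factS expnS.
have -> : (m.+1 * m`! * (n`! * n`! ^ m) = (m.+1 * n`!) * (m`! * n`! ^ m))%N by ring.
have -> : (m.+1 * 'C((m * n + n).-1, n.-1) * (n`! * (m * n)`!) =
   (m.+1 * n`!) * ('C((m * n + n).-1, n.-1) * (m * n)`!))%N by ring.
by apply: dvdn_mul => //; apply: dvdn_mull.
Qed.

Section NaiveDividedPowers.
Variable R : idomainType.
Hypothesis R_char0 : forall n, (0 < n)%N -> n%:R != 0 :> R.

(* x ^+ n / n`!, with junk value 0 when n`! does not divide x ^+ n. *)
Definition dpow n (x : R) : R :=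
  match pselect (exists y, (n`!)%:R * y = x ^+ n) with
  | left ex_y => sval (cid ex_y) | right _ => 0 end.

Definition has_dpow (x : R) := forall n, (n`!)%:R * dpow n x = x ^+ n.

Lemma natr_fact_neq0 n : (n`!)%:R != 0 :> R.
Proof. exact: R_char0 (fact_gt0 n). Qed.

Lemma dpow_eq n x y : (n`!)%:R * y = x ^+ n -> dpow n x = y.
Proof.
move=> y_eq; rewrite /dpow; case: pselect => [ex_y|[]]; last by exists y.
by case: (cid ex_y) => z z_eq /=; apply: (mulfI (natr_fact_neq0 n)); rewrite z_eq.
Qed.

Lemma dpow0 x : dpow 0 x = 1.
Proof. by apply: dpow_eq; rewrite fact0 mul1r expr0. Qed.

Lemma dpow1 x : dpow 1 x = x.
Proof. by apply: dpow_eq; rewrite mul1r expr1. Qed.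

Section HasDpow.
Variable x : R.
Hypothesis x_dpow : has_dpow x.

Lemma dpowMl n l : dpow n (l * x) = l ^+ n * dpow n x.
Proof. by apply: dpow_eq; rewrite mulrCA x_dpow exprMn. Qed.

Lemma dpowD n y : has_dpow y ->
  dpow n (x + y) = \sum_(i < n.+1) dpow i x * dpow (n - i) y.
Proof.
move=> y_dpow; apply: dpow_eq; rewrite big_distrr addrC exprDn.
apply: eq_bigr => i _; have i_le_n : (i <= n)%N by rewrite -ltnS ltn_ord.
rewrite /= -[RHS]mulr_natl -(bin_fact i_le_n) !natrM -x_dpow -y_dpow; ring.
Qed.

Lemma dpow_mul m n : dpow m x * dpow n x = 'C(m + n, m)%:R * dpow (m + n) x.
Proof.
apply: (mulfI (mulf_neq0 (natr_fact_neq0 m) (natr_fact_neq0 n))).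
have bin_eq := bin_fact (leq_addr n m); rewrite addKn in bin_eq.
transitivity (((m`!)%:R * dpow m x) * ((n`!)%:R * dpow n x)); first by ring.
transitivity ((('C(m + n, m) * (m`! * n`!))%N)%:R * dpow (m + n) x).
  by rewrite bin_eq !x_dpow exprD.
by rewrite !natrM; ring.
Qed.

Lemma dpow_dpow m n : (0 < n)%N -> has_dpow (dpow n x) ->
  dpow m (dpow n x) = (((m * n)`! %/ (m`! * n`! ^ m))%N)%:R * dpow (m * n) x.
Proof.
move=> n_gt0 dpow_n_dpow; have fact_dvd := divnK (fact_expn_fact_dvdn m n_gt0).
have : ((m`! * n`! ^ m)%N)%:R != 0 :> R.
  by apply: R_char0; rewrite muln_gt0 fact_gt0 expn_gt0 fact_gt0.
move/mulfI; apply.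
transitivity ((n`!)%:R ^+ m * ((m`!)%:R * dpow m (dpow n x))).
  by rewrite natrM natrX; ring.
rewrite dpow_n_dpow -exprMn x_dpow -exprM mulrA -natrM.
by rewrite [(m`! * _ * _)%N]mulnC fact_dvd x_dpow mulnC.
Qed.

End HasDpow.
End NaiveDividedPowers.

(* ring_quotient equips quotients with no unit structure; classically, every
   commutative ring has one. *)
Section ClassicalInverse.
Variable T : comNzRingType.

Definition cunit : {pred T} := fun x => `[< exists y, y * x = 1 >].

Definition cinv (x : T) : T :=
  match pselect (exists y, y * x = 1) with
  | left ex_y => sval (cid ex_y) | right _ => x end.

Lemma cmulVr : {in cunit, left_inverse 1 cinv *%R}.
Proof.
by move=> x /asboolP x_unit; rewrite /cinv; case: pselect => // ex_y; case: cid.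
Qed.

Lemma cunitPl x y : y * x = 1 -> cunit x.
Proof. by move=> yx1; apply/asboolP; exists y. Qed.

Lemma cinv_out : {in [predC cunit], cinv =1 id}.
Proof. by move=> x; rewrite inE => /asboolP x_nonunit; rewrite /cinv; case: pselect. Qed.

End ClassicalInverse.

Section PrincipalQuotient.
Variables (R : comUnitRingType) (c : R).

(* When c is a unit we use the zero ideal instead, since ring_quotient only
   accepts proper ideals; below c is always a nonunit. *)
Definition principal_pred : pred R := fun x =>
  if c \is a GRing.unit then x == 0 else `[< exists r, x = c * r >].

Lemma principal_pred_closed : idealr_closed principal_pred.
Proof.
have [c_unit|c_nonunit] := boolP (c \is a GRing.unit); split;
  rewrite /in_mem /= /principal_pred ?c_unit ?(negPf c_nonunit).
- by [].
- by rewrite oner_eq0.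
- by move=> a x y /eqP-> /eqP->; rewrite mulr0 addr0.
- by apply/asboolP; exists 0; rewrite mulr0.
- apply/negP => /asboolP [r /(congr1 (fun x => x \in GRing.unit))].
  by rewrite unitr1 unitrM (negPf c_nonunit).
- move=> a x y /asboolP [r ->] /asboolP [s ->]; apply/asboolP.
  by exists (a * r + s); rewrite mulrDr mulrCA.
Qed.

HB.instance Definition _ := isIdealr.Build R principal_pred principal_pred_closed.

Definition principal_idealr : idealr R := Idealr.clone R principal_pred _.

Local Notation Q := {ideal_quot principal_idealr}.
Local Notation pq := (\pi_Q : R -> Q).

HB.instance Definition _ := GRing.ComNzRing_hasMulInverse.Build Q
  (@cmulVr Q) (@cunitPl Q) (@cinv_out Q).

Hypothesis c_nonunit : c \notin GRing.unit.

Lemma principal_quotP x y : pq x = pq y <-> exists r, x - y = c * r.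
Proof.
have := Quotient.idealrBE principal_idealr x y.
rewrite /in_mem /= /principal_pred (negPf c_nonunit) => mem_eq.
split=> [pq_eq | /asboolP].
  by apply/asboolP; rewrite mem_eq; apply/eqP.
by rewrite mem_eq => /eqP.
Qed.

Lemma principal_quot_eq0 x : pq x = 0 <-> exists r, x = c * r.
Proof.
rewrite -(rmorph0 (\pi_Q : {rmorphism R -> Q})) principal_quotP.
by rewrite subr0.
Qed.

Hypothesis R_local : is_local R.

Lemma unit_principal_quot x : (pq x \in GRing.unit) = (x \in GRing.unit).
Proof.
apply/idP/idP => [/asboolP [y] | x_unit]; last first.
  by apply/asboolP; exists (\pi x^-1); rewrite -rmorphM mulVr ?rmorph1.
rewrite -[y]reprK -rmorphM -(rmorph1 (\pi_Q : {rmorphism R -> Q})).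
case/principal_quotP => r yx_eq; apply/negPn/negP => x_nonunit.
have : repr y * x - c * r \notin GRing.unit.
  by apply: R_local; rewrite ?unitrN unitrM negb_and ?x_nonunit ?c_nonunit ?orbT.
by rewrite -yx_eq opprB addrC subrK unitr1.
Qed.

Lemma principal_quot_local : is_local Q.
Proof.
move=> a b; rewrite -[a]reprK -[b]reprK -rmorphD !unit_principal_quot.
exact: R_local.
Qed.

End PrincipalQuotient.

Section TruncatedDVR.
Variables (R : idomainType) (pi : R) (N : nat).
Hypotheses (pi_uniformizer : is_uniformizer pi) (N_gt0 : (0 < N)%N).

Local Notation A := {ideal_quot (principal_idealr (pi ^+ N))}.
Local Notation pq := (\pi_A : R -> A).

Lemma uniformizer_expr_nonunit : pi ^+ N \notin GRing.unit.
Proof. by rewrite -(prednK N_gt0) exprS uniformizer_mul_nonunit. Qed.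

Lemma truncated_quotP x y : pq x = pq y <-> exists r, x - y = pi ^+ N * r.
Proof. exact: (@principal_quotP _ _ uniformizer_expr_nonunit). Qed.

Lemma truncated_quot_eq0 x : pq x = 0 <-> exists r, x = pi ^+ N * r.
Proof. exact: (@principal_quot_eq0 _ _ uniformizer_expr_nonunit). Qed.

Lemma unit_truncated x : (pq x \in GRing.unit) = (x \in GRing.unit).
Proof.
exact: (@unit_principal_quot _ _ uniformizer_expr_nonunit
  (uniformizer_local pi_uniformizer)).
Qed.

Lemma truncated_local : is_local A.
Proof.
exact: (@principal_quot_local _ _ uniformizer_expr_nonunit
  (uniformizer_local pi_uniformizer)).
Qed.

Lemma truncated_nonunit a : a \notin GRing.unit -> exists r, a = pq (pi * r).
Proof.
rewrite -[a]reprK unit_truncated => /(uniformizer_dvd_nonunit pi_uniformizer).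
by case=> r ->; exists r.
Qed.

Definition pow_submod k (a : A) : Prop := exists r, a = pq (pi ^+ k * r).

Lemma pow_submod_submodule k : is_submodule pq (pow_submod k).
Proof.
split; first by exists 0; rewrite mulr0 rmorph0.
split; first by move=> a b [r ->] [s ->]; exists (r + s); rewrite mulrDr rmorphD.
by move=> r a [s ->]; exists (r * s); rewrite -rmorphM mulrCA.
Qed.

Lemma pow_submod0 a : pow_submod 0 a.
Proof. by exists (repr a); rewrite expr0 mul1r reprK. Qed.

Lemma pow_submodN a : pow_submod N a <-> a = 0.
Proof.
split=> [[r ->] | ->]; first by apply/truncated_quot_eq0; exists r.
by exists 0; rewrite mulr0 rmorph0.
Qed.

Lemma pow_submodS k a : pow_submod k.+1 a -> pow_submod k a.
Proof. by case=> r ->; exists (pi * r); rewrite exprS mulrCA -mulrA. Qed.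

Lemma pow_submod_expr k : (k < N)%N -> ~ pow_submod k.+1 (pq (pi ^+ k)).
Proof.
move=> k_lt_N [r /truncated_quotP [t diff_eq]].
have pi_neq0 : pi != 0 by case: pi_uniformizer.
have N_eq : pi ^+ N = pi ^+ k.+1 * pi ^+ (N - k.+1) by rewrite -exprD subnKC.
have one_eq : (1 : R) = pi * (r + pi ^+ (N - k.+1) * t).
  apply: (mulfI (expf_neq0 k pi_neq0)).
  transitivity (pi ^+ k - (pi ^+ k - pi ^+ k.+1 * r - pi ^+ N * t)).
    by rewrite diff_eq subrr subr0 mulr1.
  by rewrite N_eq exprS; ring.
move: (uniformizer_mul_neq1 pi_uniformizer (r + pi ^+ (N - k.+1) * t)).
by rewrite -one_eq eqxx.
Qed.

Lemma pow_submod_maximal k (S : A -> Prop) : is_submodule pq S ->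
  (forall a, S a -> pow_submod k a) ->
  (forall a, S a -> pow_submod k.+1 a) \/ (forall a, pow_submod k a -> S a).
Proof.
move=> [_ [_ S_scale]] S_sub.
have [[b [Sb b_notin]] | S_small] :=
  pselect (exists b, S b /\ ~ pow_submod k.+1 b); last first.
  by left=> a Sa; apply: contrapT => a_notin; apply: S_small; exists a.
right; have [c b_eq] := S_sub b Sb.
have c_unit : c \in GRing.unit.
  apply: contrapT => /negP /(uniformizer_dvd_nonunit pi_uniformizer) [c' c_eq].
  by apply: b_notin; exists c'; rewrite b_eq c_eq mulrA -exprSr.
move=> a [r ->]; have -> : pq (pi ^+ k * r) = pq (r * c^-1) * b.
  by rewrite b_eq -rmorphM mulrACA mulVr // mulr1 mulrC.
exact: S_scale.
Qed.

Lemma truncated_finite_length : finite_length (\pi_A : {rmorphism R -> A}).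
Proof.
exists N, (fun i => pow_submod (N - i)).
split; first by move=> a; rewrite subn0 pow_submodN.
split; first by move=> a; rewrite subnn; exact: pow_submod0.
split; first by move=> i _; exact: pow_submod_submodule.
move=> i i_lt_N; rewrite -(subnSK i_lt_N).
have k_lt_N : (N - i.+1 < N)%N by rewrite ltn_subrL.
split; first exact: pow_submodS.
split; first by exists (pq (pi ^+ (N - i.+1))); split;
  [exists 1; rewrite mulr1 | exact: pow_submod_expr].
move=> S S_submod _; exact: pow_submod_maximal.
Qed.

Lemma truncated_unit_mul_expr_neq0 v k : v \in GRing.unit -> (k < N)%N ->
  pq (v * pi ^+ k) != 0.
Proof.
move=> v_unit k_lt_N; apply/eqP => /(congr1 ( *%R (pq v^-1))).
rewrite mulr0 -rmorphM mulrA mulVr // mul1r => pik0.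
by apply: (pow_submod_expr k_lt_N); rewrite pik0; exists 0; rewrite mulr0 rmorph0.
Qed.

Variables (p : nat) (u : R) (e : nat).
Hypotheses (R_mixed_char : mixed_char R p) (u_unit : u \in GRing.unit)
  (p_ramification : p%:R = u * pi ^+ e) (e_lt_p : (e < p)%N).

Let R_char0 n : (0 < n)%N -> n%:R != 0 :> R.
Proof. by case: R_mixed_char => _ [/(_ n)]. Qed.

Lemma natr_fact_dvd_pi_mul_expr n r :
  exists s, (n.+1`!)%:R * (pi * s) = (pi * r) ^+ n.+1.
Proof.
have [w /= w_eq] := fact_dvd_uniformizer_exp pi_uniformizer R_mixed_char u_unit
  p_ramification e_lt_p (ltn0Sn n).
by exists (w * r ^+ n.+1); rewrite exprMn [pi ^+ n.+1]exprS w_eq; ring.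
Qed.

Lemma has_dpow_pi_mul r : has_dpow (pi * r).
Proof.
case=> [|n]; first by rewrite (dpow0 R_char0) mulr1 expr0.
have [s s_eq] := natr_fact_dvd_pi_mul_expr n r.
by rewrite (dpow_eq R_char0 s_eq).
Qed.

Lemma dpow_pi_mul n r : exists s, dpow n.+1 (pi * r) = pi * s.
Proof.
have [s s_eq] := natr_fact_dvd_pi_mul_expr n r.
by exists s; rewrite (dpow_eq R_char0 s_eq).
Qed.

(* pi^(N(n+1)) / (n+1)! is divisible by pi^(N + n) since N + n <= N(n+1). *)
Lemma dpow_pi_expr_mul n s : exists t, dpow n.+1 (pi ^+ N * s) = pi ^+ N * t.
Proof.
have [w /= w_eq] := fact_dvd_uniformizer_exp pi_uniformizer R_mixed_char u_unit
  p_ramification e_lt_p (ltn0Sn n).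
have N_split : (N + n + (N * n.+1 - n - N) = N * n.+1)%N.
  by move: (leq_pmull n N_gt0); rewrite mulnS; lia.
set k := (N * n.+1 - n - N)%N in N_split *.
exists (w * pi ^+ k * s ^+ n.+1); apply: (dpow_eq R_char0).
by rewrite exprMn -exprM -N_split !exprD [pi ^+ n]w_eq; ring.
Qed.

Lemma truncated_dpowD n r d :
  pq (dpow n (pi * r + pi ^+ N * d)) = pq (dpow n (pi * r)).
Proof.
have [t t_eq] : exists t, pi ^+ N * d = pi * t.
  by exists (pi ^+ N.-1 * d); rewrite mulrA -exprS prednK.
rewrite [in LHS]t_eq (dpowD R_char0 (has_dpow_pi_mul r) n (has_dpow_pi_mul t)) -t_eq.
rewrite big_ord_recr /= subnn (dpow0 R_char0) mulr1 rmorphD /= rmorph_sum.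
rewrite big1 ?add0r // => i _.
have := dpow_pi_expr_mul (n - i).-1 d; rewrite prednK ?subn_gt0 // => -[s ->].
by apply/truncated_quot_eq0; exists (dpow i (pi * r) * s); rewrite mulrCA.
Qed.

Definition truncated_dpow n (a : A) : A := pq (dpow n (repr a)).

Lemma truncated_dpowE n r : truncated_dpow n (pq (pi * r)) = pq (dpow n (pi * r)).
Proof.
have /truncated_quotP [d repr_eq] : pq (repr (pq (pi * r))) = pq (pi * r).
  by rewrite reprK.
by rewrite /truncated_dpow -[repr _](subrK (pi * r)) repr_eq addrC truncated_dpowD.
Qed.

Lemma truncated_pd_structure : is_pd_structure (@maxideal A) truncated_dpow.
Proof.
move=> x y /truncated_nonunit [r ->] /truncated_nonunit [s ->].
have r_dpow := has_dpow_pi_mul r.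
split; first by rewrite truncated_dpowE (dpow0 R_char0) rmorph1.
split; first by rewrite truncated_dpowE (dpow1 R_char0).
split.
  case=> // n _; have [t t_eq] := dpow_pi_mul n r.
  by rewrite /maxideal truncated_dpowE t_eq unit_truncated uniformizer_mul_nonunit.
split.
  move=> n; rewrite -rmorphD -mulrDr !truncated_dpowE mulrDr.
  rewrite (dpowD R_char0 r_dpow n (has_dpow_pi_mul s)) rmorph_sum.
  by apply: eq_bigr => i _; rewrite rmorphM !truncated_dpowE.
split.
  move=> l n; rewrite -[l]reprK -rmorphM mulrCA !truncated_dpowE -mulrCA.
  by rewrite (dpowMl R_char0 r_dpow) rmorphM rmorphXn.
split.
  move=> m n; rewrite !truncated_dpowE -rmorphM (dpow_mul R_char0 r_dpow).
  by rewrite rmorphM rmorph_nat.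
move=> m [//|n] _; have [t t_eq] := dpow_pi_mul n r.
rewrite [truncated_dpow n.+1 _]truncated_dpowE t_eq !truncated_dpowE -t_eq.
rewrite (dpow_dpow R_char0 r_dpow) ?rmorphM ?rmorph_nat //.
by rewrite t_eq; exact: has_dpow_pi_mul.
Qed.

Lemma truncated_pd_test_algebra : pd_test_algebra (\pi_A : {rmorphism R -> A}).
Proof.
split; first exact: truncated_local.
split; first exact: truncated_finite_length.
by exists truncated_dpow; exact: truncated_pd_structure.
Qed.

End TruncatedDVR.

Lemma finite_length_rmorph_nonunit (R A : comUnitRingType) (g : {rmorphism R -> A})
  (pi : R) : (forall r, 1 + pi * r \in GRing.unit) -> finite_length g ->
  g pi \notin GRing.unit.
Proof.
move=> pi_radical [n [M [M0 [Mn [M_submod M_step]]]]].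
case: n Mn M_submod M_step => [|n] Mn M_submod M_step.
  by have /(M0 1).1/eqP := Mn 1; rewrite oner_eq0.
have [_ [[b [M1b b_notin]] M1_simple]] := M_step 0%N (ltn0Sn n).
have b_neq0 : b <> 0 by move=> b0; apply: b_notin; apply/(M0 b).2.
have [_ [_ M1_scale]] := M_submod 1%N (ltn0Sn n).
apply/negP => gpi_unit.
pose S c := exists r, c = g (pi * r) * b.
have S_submod : is_submodule g S.
  split; first by exists 0; rewrite mulr0 rmorph0 mul0r.
  split; first by move=> c d [r ->] [s ->]; exists (r + s); rewrite mulrDr rmorphD mulrDl.
  by move=> r c [s ->]; exists (r * s); rewrite mulrA -rmorphM mulrCA.
case: (M1_simple S S_submod) => [c /(M0 c).1 ->|c [r ->]|S_M0|M1_S].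
- by exists 0; rewrite mulr0 rmorph0 mul0r.
- exact: M1_scale.
- have /S_M0/(M0 _).1 gpib0 : S (g pi * b) by exists 1; rewrite mulr1.
  by apply: b_neq0; apply: (mulrI gpi_unit); rewrite mulr0.
- have [r b_eq] := M1_S b M1b.
  apply: b_neq0; apply: (mulrI (rmorph_unit g (pi_radical (- r)))).
  by rewrite rmorphD rmorph1 mulrDl mul1r mulrN rmorphN mulNr -b_eq subrr mulr0.
Qed.

Lemma pd_expr (A : comUnitRingType) (gamma : nat -> A -> A) a :
  is_pd_structure (@maxideal A) gamma -> maxideal a ->
  forall n, a ^+ n = (n`!)%:R * gamma n a.
Proof.
move=> gamma_pd a_max; have [g0 [g1 [_ [_ [_ [gM _]]]]]] := gamma_pd a a a_max a_max.
elim=> [|n IH]; first by rewrite g0 expr0 mulr1.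
rewrite exprSr IH -{2}g1 -mulrA gM addn1 binSn factS natrM; ring.
Qed.

(* a^n = n (n-1)! gamma_n(a) = a^n c with c in m_A, and 1 - c is a unit. *)
Lemma pd_local_natr_eq0 (A : comUnitRingType) (gamma : nat -> A -> A) (a v : A)
  (n e : nat) : is_local A -> is_pd_structure (@maxideal A) gamma ->
  a \notin GRing.unit -> (0 < n)%N -> n%:R = v * a ^+ e -> (n <= e)%N ->
  (n%:R : A) = 0.
Proof.
move=> A_local gamma_pd a_max n_gt0 n_eq n_le_e.
have [_ [_ [gamma_max _]]] := gamma_pd a a a_max a_max.
set c := (n.-1`!)%:R * v * a ^+ (e - n) * gamma n a.
have c_max : c \notin GRing.unit by rewrite unitrM negb_and gamma_max ?orbT.
have an_eq : a ^+ n * (1 - c) = 0.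
  apply/eqP; rewrite mulrBr mulr1 subr_eq0 {1}(pd_expr gamma_pd a_max n); apply/eqP.
  rewrite -(prednK n_gt0) factS natrM prednK // n_eq /c -{1}(subnKC n_le_e) exprD; ring.
have unit1Bc : 1 - c \in GRing.unit.
  by apply: contraT => /(A_local _ _)/(_ c_max); rewrite subrK unitr1.
have an0 : a ^+ n = 0 by rewrite -(mulrK unit1Bc (a ^+ n)) an_eq mul0r.
by rewrite n_eq -(subnKC n_le_e) exprD an0 mul0r mulr0.
Qed.

Lemma pd_test_algebra_natr_eq0 (R A : comUnitRingType) (g : {rmorphism R -> A})
  (pi u : R) (n e : nat) : (forall r, 1 + pi * r \in GRing.unit) -> (0 < n)%N ->
  n%:R = u * pi ^+ e -> (n <= e)%N -> pd_test_algebra g -> (n%:R : A) = 0.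
Proof.
move=> pi_radical n_gt0 n_eq n_le_e [A_local [A_finite [gamma gamma_pd]]].
apply: (pd_local_natr_eq0 A_local gamma_pd
  (finite_length_rmorph_nonunit pi_radical A_finite) n_gt0 _ n_le_e).
by rewrite -(rmorph_nat g) n_eq rmorphM rmorphXn.
Qed.

Lemma mixed_char_rmorph_neq0 (L L1 : idomainType) (f : {rmorphism L -> L1}) p x :
  is_dvr L -> mixed_char L p -> mixed_char L1 p -> x != 0 -> f x != 0.
Proof.
move=> [pi pi_uniformizer] [p_prime [_ p_nonunit]] [_ [L1_char0 _]] x_neq0.
have [s p_eq] := uniformizer_dvd_nonunit pi_uniformizer p_nonunit.
have f_pi_neq0 : f pi != 0.
  apply: contraNneq (L1_char0 p (prime_gt0 p_prime)) => f_pi0.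
  by rewrite -(rmorph_nat f) p_eq rmorphM f_pi0 mul0r.
case: pi_uniformizer => _ [_ /(_ x x_neq0)] [m [w [w_unit ->]]].
rewrite rmorphM rmorphXn mulf_neq0 ?expf_neq0 //.
by apply: contraTneq (rmorph_unit f w_unit) => ->; rewrite unitr0.
Qed.

Theorem mainTheorem7 (p : nat) (L L1 : idomainType) (f : {rmorphism L -> L1})
  (pi1 u1 : L1) (e1 : nat) :
  is_dvr L -> is_dvr L1 -> mixed_char L p -> mixed_char L1 p ->
  local_hom f ->
  is_uniformizer pi1 -> u1 \in GRing.unit -> (p%:R : L1) = u1 * pi1 ^+ e1 ->
  (slightly_ramified f <-> (e1 < p)%N).
Proof.
move=> L_dvr _ L_mixed L1_mixed _ pi1_uniformizer u1_unit p_ramification; split.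
  move=> f_slight; rewrite ltnNge; apply/negP => p_le_e1.
  have [p_prime [L_char0 _]] := L_mixed; have p_gt0 := prime_gt0 p_prime.
  have /eqP : (p%:R : L) = 0.
    apply: f_slight => A g g_test; rewrite !rmorph_nat.
    exact: pd_test_algebra_natr_eq0 (unitr1Dpi pi1_uniformizer) p_gt0
      p_ramification p_le_e1 g_test.
  by apply/negP; exact: L_char0.
move=> e1_lt_p x x_killed; apply/eqP; apply: contraT => x_neq0.
have [_ [_ /(_ _ (mixed_char_rmorph_neq0 f L_dvr L_mixed L1_mixed x_neq0))]] :=
  pi1_uniformizer.
case=> k [v [v_unit fx_eq]].
have := x_killed _ _ (truncated_pd_test_algebra pi1_uniformizer (ltn0Sn k)
  L1_mixed u1_unit p_ramification e1_lt_p).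
rewrite fx_eq => /eqP.
by rewrite (negPf (truncated_unit_mul_expr_neq0 pi1_uniformizer _ v_unit (ltnSn k))).
Qed.
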